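(* Let $T$ be a monad on $\mathsf{Set}$ which is continuous and commutative (in the senses described in the context). Then for every $n\in\mathbb{N}\cup\{\omega\}$, every $\Gamma\in T([n])$ and every set $X$, we have $\Gamma\mathrel{>\!\!>=}(i\mapsto\bot_{T(X)})=\bot_{T(X)}$, where $\bot_{T(X)}$ is the least element of $T(X)$.
   Context: $[n]=\{1,\dots,n\}$ for $n\in\mathbb{N}$, $[\omega]=\mathbb{N}$. For $\mu\in T(X)$ and $f:X\to T(Y)$, $\mu\mathrel{>\!\!>=} f$ is the Kleisli extension of $f$ applied to $\mu$. $T$ is continuous if every $T(X)$ carries an $\omega$-cppo structure (a partial order with least element $\bot_{T(X)}$ and suprema of $\omega$-chains) such that $\mathrel{>\!\!>=}$ is continuous in both arguments (ordering functions $X\to T(Y)$ pointwise). Standing assumptions of the paper in this setting: $\eta(1)\neq\bot$ in $T([1])$ (so $T([1])$ has at least two elements), and for every function $f$ the map $T(f)$ is strict, i.e. preserves least elements. $T$ is commutative if for all $n,m\in\mathbb{N}\cup\{\omega\}$, all $\Gamma\in T([n])$, $\Delta\in T([m])$, all sets $X$ and all $x_{i,j}\in X$ ($i\in[n]$, $j\in[m]$): $\Gamma\mathrel{>\!\!>=}(i\mapsto \Delta\mathrel{>\!\!>=}(j\mapsto\eta(x_{i,j})))=\Delta\mathrel{>\!\!>=}(j\mapsto\Gamma\mathrel{>\!\!>=}(i\mapsto\eta(x_{i,j})))$. *)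

(* Monads on Set are modelled as monads on Type. *)

(* Index sets [n] for n in N ∪ {ω}: [Some k] encodes k (with [k] = {1..k},
   represented 0-based as {i | i < k}), [None] encodes ω (with [ω] = nat). *)
Definition natw := option nat.

Definition idx (n : natw) : Type :=
  match n with
  | Some k => {i : nat | i < k}
  | None => nat
  end.

Definition idx1_one : idx (Some 1) := exist (fun i => i < 1) 0 (le_n 1).

Record is_monad (T : Type -> Type) (ret : forall X, X -> T X)
  (bind : forall X Y, T X -> (X -> T Y) -> T Y) : Prop := {
  bind_ret_l : forall X Y (x : X) (f : X -> T Y), bind X Y (ret X x) f = f x;
  bind_ret_r : forall X (m : T X), bind X X m (ret X) = m;
  bind_assoc : forall X Y Z (m : T X) (f : X -> T Y) (g : Y -> T Z),
      bind Y Z (bind X Y m f) g = bind X Z m (fun x => bind Y Z (f x) g)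
}.

Definition fmap (T : Type -> Type) (ret : forall X, X -> T X)
  (bind : forall X Y, T X -> (X -> T Y) -> T Y) {X Y : Type} (f : X -> Y)
  (m : T X) : T Y := bind X Y m (fun x => ret Y (f x)).

Definition is_chain {A : Type} (le : A -> A -> Prop) (c : nat -> A) : Prop :=
  forall i, le (c i) (c (S i)).

Definition is_lub {A : Type} (le : A -> A -> Prop) (c : nat -> A) (s : A) : Prop :=
  (forall i, le (c i) s) /\ (forall u, (forall i, le (c i) u) -> le s u).

Record is_wcppo (A : Type) (le : A -> A -> Prop) (bot : A) : Prop := {
  cppo_refl : forall a, le a a;
  cppo_trans : forall a b c, le a b -> le b c -> le a c;
  cppo_antisym : forall a b, le a b -> le b a -> a = b;
  cppo_bot : forall a, le bot a;
  cppo_sup : forall c : nat -> A, is_chain le c -> exists s, is_lub le c s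
}.

Definition pw_le {X A : Type} (le : A -> A -> Prop) (f g : X -> A) : Prop :=
  forall x, le (f x) (g x).

Definition continuous_map {A B : Type} (leA : A -> A -> Prop)
  (leB : B -> B -> Prop) (F : A -> B) : Prop :=
  (forall a b, leA a b -> leB (F a) (F b)) /\
  (forall (c : nat -> A) (s : A), is_chain leA c -> is_lub leA c s ->
       is_lub leB (fun i => F (c i)) (F s)).

Definition is_continuous_monad (T : Type -> Type)
  (bind : forall X Y, T X -> (X -> T Y) -> T Y)
  (le : forall X, T X -> T X -> Prop) (bot : forall X, T X) : Prop :=
  (forall X, is_wcppo (T X) (le X) (bot X)) /\
  (forall X Y (f : X -> T Y),
      continuous_map (le X) (le Y) (fun m => bind X Y m f)) /\
  (forall X Y (m : T X),
      continuous_map (pw_le (le Y)) (le Y) (fun f : X -> T Y => bind X Y m f)).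

Definition is_commutative_monad (T : Type -> Type) (ret : forall X, X -> T X)
  (bind : forall X Y, T X -> (X -> T Y) -> T Y) : Prop :=
  forall (n m : natw) (G : T (idx n)) (D : T (idx m)) (X : Type)
         (x : idx n -> idx m -> X),
    bind (idx n) X G (fun i => bind (idx m) X D (fun j => ret X (x i j))) =
    bind (idx m) X D (fun j => bind (idx n) X G (fun i => ret X (x i j))).

From Stdlib Require Import FunctionalExtensionality PeanoNat.

(* By strictness, the least element of [T X] is the image of the least
   element of [T [0]] under [T] of the empty map [[0] -> X].  Commutativity
   moves [G] inside that bind, where it acts on the (vacuous) continuation of
   an empty index set and so disappears. *)

Definition idx0_elim {X : Type} (j : idx (Some 0)) : X :=
  False_rect X (Nat.nlt_0_r _ (proj2_sig j)).

Lemma idx0_fun_eq {A : Type} (f g : idx (Some 0) -> A) : f = g.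
Proof.
  apply functional_extensionality; intros [j Hj].
  exfalso; exact (Nat.nlt_0_r _ Hj).
Qed.

Section StrictCommutativeMonad.

Variables (T : Type -> Type) (ret : forall X, X -> T X)
  (bind : forall X Y, T X -> (X -> T Y) -> T Y) (bot : forall X, T X).

Hypothesis fmap_bot : forall (X Y : Type) (f : X -> Y),
  fmap T ret bind f (bot X) = bot Y.
Hypothesis bind_comm : is_commutative_monad T ret bind.

Lemma bot_fmap_idx0_elim (X : Type) :
  bot X = bind (idx (Some 0)) X (bot _) (fun j => ret X (idx0_elim j)).
Proof. symmetry; exact (fmap_bot _ _ idx0_elim). Qed.

Lemma bind_bot_r (n : natw) (G : T (idx n)) (X : Type) :
  bind (idx n) X G (fun _ => bot X) = bot X.
Proof.
  transitivity (bind (idx n) X G (fun _ =>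
    bind (idx (Some 0)) X (bot _) (fun j => ret X (idx0_elim j)))).
  { f_equal; apply functional_extensionality; intros _.
    apply bot_fmap_idx0_elim. }
  rewrite (bind_comm n (Some 0) G (bot _) X (fun _ j => idx0_elim j)).
  rewrite (idx0_fun_eq (fun j => bind (idx n) X G (fun _ => ret X (idx0_elim j)))
                       (fun j => ret X (idx0_elim j))).
  symmetry; apply bot_fmap_idx0_elim.
Qed.

End StrictCommutativeMonad.

Theorem proposition5p14
  (T : Type -> Type) (ret : forall X, X -> T X)
  (bind : forall X Y, T X -> (X -> T Y) -> T Y)
  (le : forall X, T X -> T X -> Prop) (bot : forall X, T X)
  (Hmonad : is_monad T ret bind)
  (Hcont : is_continuous_monad T bind le bot)
  (Hnontriv : ret (idx (Some 1)) idx1_one <> bot (idx (Some 1)))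
  (Hstrict : forall (X Y : Type) (f : X -> Y), fmap T ret bind f (bot X) = bot Y)
  (Hcomm : is_commutative_monad T ret bind) :
  forall (n : natw) (G : T (idx n)) (X : Type),
    bind (idx n) X G (fun _ => bot X) = bot X.
Proof.
  intros n G X.
  exact (bind_bot_r T ret bind bot Hstrict Hcomm n G X).
Qed.
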